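(* Let $A$ be a finite alphabet and $L\subseteq A^*$. If $L\subseteq\bigcup_iP_i\subseteq{\downarrow}L$ for a family $(P_i)_i$ of D-products of length at most $\ell$, then $h({\downarrow}L)\leq\ell+1$ and $h({\downarrow}_<L)\leq\ell+1$.
   Context: A D-product is a regular expression $E_1E_2\cdots E_\ell$ where each $E_i$ is either $B^*$ for some subalphabet $B\subseteq A$ or a single letter $a\in A$; $\ell$ is its length, and it also denotes its language. $u\sqsubseteq v$ (subword) means $u=a_1\cdots a_n$ with letters $a_i$ and $v=v_0a_1v_1\cdots a_nv_n$; $u\sqsubset v$ means $u\sqsubseteq v$, $u\ne v$. ${\downarrow}L=\{v~|~\exists u\in L: v\sqsubseteq u\}$, ${\downarrow}_<L=\{v~|~\exists u\in L:v\sqsubset u\}$. $u\sim_n v$ iff $u,v$ have the same subwords of length at most $n$; $L$ is $n$-PT if it is a union of $\sim_n$-classes, and $h(L)$ is the least such $n$. *)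

From mathcomp Require Import all_boot.
Set Implicit Arguments. Unset Strict Implicit. Unset Printing Implicit Defensive.

Section Defs.
Variable A : finType.

(* A factor of a D-product: either B^* for a subalphabet B, or a letter a. *)
Inductive ditem : Type :=
  | DStar of {set A}
  | DLetter of A.

Definition dproduct := seq ditem.

Fixpoint in_dproduct (P : dproduct) (w : seq A) : Prop :=
  match P with
  | [::] => w = [::]
  | DLetter a :: P' => exists w', w = a :: w' /\ in_dproduct P' w'
  | DStar B :: P' => exists w1 w2, w = w1 ++ w2 /\ all (fun x => x \in B) w1
                                   /\ in_dproduct P' w2
  end.

(* Subword order: u ⊑ v is mathcomp's [subseq u v]; strict: u ⊏ v. *)
Definition strict_subword (u v : seq A) : bool := subseq u v && (u != v).

Definition downcl (L : seq A -> Prop) : seq A -> Prop :=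
  fun v => exists u, L u /\ subseq v u.
Definition sdowncl (L : seq A -> Prop) : seq A -> Prop :=
  fun v => exists u, L u /\ strict_subword v u.

Definition simn (n : nat) (u v : seq A) : Prop :=
  forall w : seq A, size w <= n -> subseq w u = subseq w v.

Definition nPT (n : nat) (L : seq A -> Prop) : Prop :=
  forall u v, simn n u v -> (L u <-> L v).

(* h(L) <= m: the least n with L n-PT exists and is at most m. *)
Definition h_le (L : seq A -> Prop) (m : nat) : Prop :=
  exists n, n <= m /\ nPT n L.
End Defs.

From mathcomp Require Import all_boot.
From Stdlib Require Import Classical.
Set Implicit Arguments. Unset Strict Implicit. Unset Printing Implicit Defensive.

(* The downward closure of a D-product P is (|P|+1)-PT: a word outside ↓P
   already has a subword of length at most |P|+1 outside ↓P, and subwords of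
   that length are detected by ~_(|P|+1).  Under the hypotheses, ↓L is the
   union of the ↓P_i.  For ↓_<L, a word v ~_(l+1) u with u ∈ ↓_<L lies in ↓L;
   if |v| <= l then v = u, and otherwise, even when v ∈ L, v lies in some P_i
   with |P_i| < |v|, so a star factor of P_i is used and can be pumped to give
   a strictly longer word of ↓L above v. *)

Section Subwords.
Variable T : eqType.

Lemma subseq_cat_split (v u1 u2 : seq T) : subseq v (u1 ++ u2) ->
  exists v1 v2, [/\ v = v1 ++ v2, subseq v1 u1 & subseq v2 u2].
Proof.
case/subseqP=> m sz_m ->; rewrite -(cat_take_drop (size u1) m) mask_cat.
  by exists (mask (take (size u1) m) u1), (mask (drop (size u1) m) u2);
    rewrite !mask_subseq.
by rewrite size_takel // sz_m size_cat leq_addr.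
Qed.

Lemma subseq_cons_cases (c : T) w x : subseq w (c :: x) ->
  subseq w x \/ exists2 w', w = c :: w' & subseq w' x.
Proof.
case: w => [|y w] /=; first by left; rewrite sub0seq.
by case: eqP => [->|_]; [right; exists w | left].
Qed.

Lemma split_at_first_not (p : pred T) (v : seq T) :
  all p v \/ exists v1 c v2, [/\ v = v1 ++ c :: v2, all p v1 & ~~ p c].
Proof.
elim: v => [|x v IH]; first by left.
case px: (p x); last by right; exists [::], x, v; rewrite px.
case: IH => [pv | [v1 [c [v2 [-> pv1 npc]]]]]; first by left; rewrite /= px.
by right; exists (x :: v1), c, v2; rewrite /= px.
Qed.

End Subwords.

Section PiecewiseTestable.
Variable A : finType.

Lemma simn_sym n (u v : seq A) : simn n u v -> simn n v u.
Proof. by move=> uv w szw; rewrite uv. Qed.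

Lemma simn_le m n (u v : seq A) : m <= n -> simn n u v -> simn m u v.
Proof. by move=> mn uv w szw; rewrite uv // (leq_trans szw). Qed.

Lemma simn_eq_short n (u v : seq A) : simn n.+1 u v -> size v <= n -> u = v.
Proof.
move=> uv szv.
have vu : subseq v u by rewrite uv ?subseq_refl // leqW.
apply/esym/eqP; rewrite -(size_subseq_leqif vu).2 eqn_leq (size_subseq vu).
rewrite leqNgt; apply/negP=> szu.
have szt : size (take (size v).+1 u) = (size v).+1 by rewrite size_takel.
have tv : subseq (take (size v).+1 u) v by rewrite -uv ?take_subseq // szt.
by move: (size_subseq tv); rewrite szt ltnn.
Qed.

Lemma nPT_of_simn_imply n (L : seq A -> Prop) :
  (forall u v, simn n u v -> L u -> L v) -> nPT n L.
Proof. by move=> LL u v uv; split; apply: LL => //; exact: simn_sym. Qed.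

Lemma nPT_le m n (L : seq A -> Prop) : m <= n -> nPT m L -> nPT n L.
Proof. by move=> mn Lm u v /(simn_le mn); exact: Lm. Qed.

Lemma nPT_ext n (L L' : seq A -> Prop) :
  (forall v, L v <-> L' v) -> nPT n L -> nPT n L'.
Proof. by move=> LL' Ln u v /Ln; rewrite !LL'. Qed.

Lemma nPT_union (I : Type) n (L : I -> seq A -> Prop) :
  (forall i, nPT n (L i)) -> nPT n (fun v => exists i, L i v).
Proof.
move=> Ln; apply: nPT_of_simn_imply => u v uv [i Lu].
by exists i; apply/(Ln i u v uv).
Qed.

End PiecewiseTestable.

Section DownwardClosure.
Variable A : finType.
Implicit Types (P : dproduct A) (u v w : seq A).

Fixpoint down_dproduct P v : Prop :=
  match P with
  | [::] => v = [::]
  | DLetter a :: P' => down_dproduct P' v \/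
                       exists v', v = a :: v' /\ down_dproduct P' v'
  | DStar B :: P' => exists v1 v2, v = v1 ++ v2 /\ all (fun x => x \in B) v1
                                   /\ down_dproduct P' v2
  end.

Lemma down_dproductP P v : down_dproduct P v <-> downcl (in_dproduct P) v.
Proof.
split.
  elim: P v => [|[B|a] P IH] v /=; first by move=> ->; exists [::].
    move=> [v1 [v2 [-> [Bv1 /IH [u [Pu v2u]]]]]].
    by exists (v1 ++ u); split; [exists v1, u | rewrite subseq_cat2l].
  move=> [/IH [u [Pu vu]] | [v' [-> /IH [u [Pu v'u]]]]].
    by exists (a :: u); split; [exists u | exact: subseq_trans vu (subseq_cons _ _)].
  by exists (a :: u); split; [exists u | rewrite /= eqxx].
elim: P v => [|[B|a] P IH] v /=; first by move=> [u [-> /eqP]].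
  move=> [_ [[w1 [w2 [-> [Bw1 Pw2]]]] /subseq_cat_split [v1 [v2 [-> v1w1 v2w2]]]]].
  exists v1, v2; split=> //; split; last by apply: IH; exists w2.
  by apply/allP=> z /(mem_subseq v1w1); exact: (allP Bw1).
move=> [_ [[w [-> Pw]] /subseq_cons_cases [vw | [v' -> v'w]]]].
  by left; apply: IH; exists w.
by right; exists v'; split=> //; apply: IH; exists w.
Qed.

Lemma down_dproduct_subseq P v w :
  down_dproduct P v -> subseq w v -> down_dproduct P w.
Proof.
move=> /down_dproductP [u [Pu vu]] wv; apply/down_dproductP.
by exists u; split=> //; exact: subseq_trans wv vu.
Qed.

Lemma down_dproduct_nil P : down_dproduct P [::].
Proof. by elim: P => [|[B|a] P IH] //=; [exists [::], [::] | left]. Qed.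

Lemma not_down_dproduct_cons P c x w n :
  subseq w (c :: x) -> size w <= n -> ~ down_dproduct P w ->
  exists y, [/\ subseq y x, size y <= n & ~ down_dproduct P (c :: y)].
Proof.
move=> /subseq_cons_cases [wx | [w' -> w'x]] szw nPw.
  by exists w; split=> // Pcw; apply/nPw/(down_dproduct_subseq Pcw (subseq_cons _ _)).
by exists w'; split=> //; exact: ltnW.
Qed.

Lemma not_down_dproduct_short_subword P v : ~ down_dproduct P v ->
  exists w, [/\ subseq w v, size w <= (size P).+1 & ~ down_dproduct P w].
Proof.
elim: P v => [|[B|a] P IH] v /=.
- by case: v => [|x v] // _; exists [:: x]; rewrite sub1seq mem_head.
- move=> nPv.
  have [Bv | [v1 [c [v2 [ev Bv1 Bc]]]]] := split_at_first_not (fun x => x \in B) v.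
    by case: nPv; exists v, [::]; rewrite cats0; split=> //; split=> //;
      exact: down_dproduct_nil.
  subst v.
  have nPcv2 : ~ down_dproduct P (c :: v2) by move=> Pcv2; apply: nPv; exists v1, (c :: v2).
  have [w [wcv2 szw nPw]] := IH _ nPcv2.
  have [y [yv2 szy nPcy]] := not_down_dproduct_cons wcv2 szw nPw.
  exists (c :: y); split=> //.
    by apply: subseq_trans (suffix_subseq v1 _); rewrite /= eqxx.
  move=> [[|z x1] [x2 [e [Bx1 Px2]]]]; first by apply: nPcy; rewrite e.
  by move: e Bx1 => /= [<- _] /andP [Bc' _]; rewrite Bc' in Bc.
- move=> nPv.
  have nPv' : ~ down_dproduct P v by move=> Pv; apply: nPv; left.
  case: v nPv nPv' => [|b v] nPv nPv'; first by case: nPv'; exact: down_dproduct_nil.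
  case: (eqVneq b a) => [ba | ba].
    subst b; have nPv2 : ~ down_dproduct P v by move=> Pv; apply: nPv; right; exists v.
    have [w [wv szw nPw]] := IH _ nPv2.
    exists (a :: w); split; rewrite /= ?eqxx //.
    move=> [Paw | [w' [[<-] Pw]]]; last exact: nPw.
    by apply/nPw/(down_dproduct_subseq Paw (subseq_cons _ _)).
  have [w [wbv szw nPw]] := IH _ nPv'.
  have [y [yv szy nPby]] := not_down_dproduct_cons wbv szw nPw.
  exists (b :: y); split; rewrite /= ?eqxx //.
  by move=> [Pby | [w' [[e] _]]]; [exact: nPby | rewrite e eqxx in ba].
Qed.

Lemma down_dproduct_nPT P : nPT (size P).+1 (down_dproduct P).
Proof.
apply: nPT_of_simn_imply => u v uv Pu; apply: NNPP => nPv.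
have [w [wv szw nPw]] := not_down_dproduct_short_subword nPv.
by apply/nPw/(down_dproduct_subseq Pu); rewrite uv.
Qed.

Lemma in_dproduct_pump P v : in_dproduct P v -> size P < size v ->
  exists v', [/\ in_dproduct P v', subseq v v' & size v < size v'].
Proof.
elim: P v => [|[B|a] P IH] v /=; first by move=> ->.
  move=> [[|x w1] [w2 [-> [Bw1 Pw2]]]] /= szv.
    have [v' [Pv' w2v' szv']] := IH _ Pw2 (ltnW szv).
    by exists v'; split=> //; exists [::], v'.
  exists [:: x, x & w1 ++ w2]; split; [| exact: subseq_cons | by []].
  by exists [:: x, x & w1], w2; move: Bw1 => /= /andP [-> ->].
move=> [w [-> Pw]] /= szw.
have [v' [Pv' wv' szv']] := IH _ Pw szw.
by exists (a :: v'); split; [exists v' | rewrite /= eqxx |].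
Qed.

End DownwardClosure.

Section Covering.
Variables (A : finType) (L : seq A -> Prop) (I : Type) (P : I -> dproduct A) (l : nat).
Hypothesis size_P : forall i, size (P i) <= l.
Hypothesis L_sub_P : forall w, L w -> exists i, in_dproduct (P i) w.
Hypothesis P_sub_downL : forall i w, in_dproduct (P i) w -> downcl L w.

Lemma downcl_dproducts v : downcl L v <-> exists i, down_dproduct (P i) v.
Proof.
split=> [[u [Lu vu]] | [i /down_dproductP [u [Pu vu]]]].
  by have [i Pu] := L_sub_P Lu; exists i; apply/down_dproductP; exists u.
have [x [Lx ux]] := P_sub_downL Pu.
by exists x; split=> //; exact: subseq_trans vu ux.
Qed.

Lemma downcl_nPT : nPT l.+1 (downcl L).
Proof.
apply: nPT_ext (fun v => iff_sym (downcl_dproducts v)) _.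
apply: nPT_union => i.
by apply: (nPT_le (m := (size (P i)).+1)); [rewrite ltnS | exact: down_dproduct_nPT].
Qed.

Lemma sdowncl_of_long v : downcl L v -> l < size v -> sdowncl L v.
Proof.
move=> [x [Lx vx]] szv.
case: (eqVneq v x) => [vx_eq | vx_neq]; last first.
  by exists x; split=> //; rewrite /strict_subword vx vx_neq.
subst x; have [i Pv] := L_sub_P Lx.
have [v' [Pv' vv' szv']] := in_dproduct_pump Pv (leq_ltn_trans (size_P i) szv).
have [z [Lz v'z]] := P_sub_downL Pv'.
exists z; split=> //; rewrite /strict_subword (subseq_trans vv' v'z) /=.
by apply: contraTneq szv' => ->; rewrite -leqNgt size_subseq.
Qed.

Lemma sdowncl_nPT : nPT l.+1 (sdowncl L).
Proof.
apply: nPT_of_simn_imply => u v uv Su.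
have Dv : downcl L v.
  by apply/(downcl_nPT uv); case: Su => x [Lx /andP [ux _]]; exists x.
have [szv | szv] := leqP (size v) l; last exact: sdowncl_of_long.
by rewrite -(simn_eq_short uv szv).
Qed.

End Covering.

Theorem corollary13 (A : finType) (L : seq A -> Prop) (I : Type)
    (P : I -> dproduct A) (l : nat) :
  (forall i, size (P i) <= l) ->
  (forall w, L w -> exists i, in_dproduct (P i) w) ->
  (forall i w, in_dproduct (P i) w -> downcl L w) ->
  h_le (downcl L) l.+1 /\ h_le (sdowncl L) l.+1.
Proof.
move=> size_P L_sub_P P_sub_downL.
split; exists l.+1; split=> //.
- exact: downcl_nPT size_P L_sub_P P_sub_downL.
- exact: sdowncl_nPT size_P L_sub_P P_sub_downL.
Qed.
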